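(* Let $V$ be a complex vector space of dimension $k$. Let $\mu$ and $\nu$ be partitions with at most $k$ parts, with $\nu$ obtained from $\mu$ by adding one cell. Let $\iota\colon S_\nu V^*\to V^*\otimes S_\mu V^*$ be the $GL(V)$-equivariant inclusion. Let $P\colon S_\mu V^*\otimes V^*\to S_\nu V^*$ be the $GL(V)$-equivariant projection. Let $T'\colon S_\mu V^*\otimes S_\nu V^*\to S_\nu V^*\otimes S_\mu V^*$ be the composition of $$\mathrm{id}\otimes\iota\colon S_\mu V^*\otimes S_\nu V^*\to S_\mu V^*\otimes V^*\otimes S_\mu V^*$$ with $$P\otimes \mathrm{id}\colon S_\mu V^*\otimes V^*\otimes S_\mu V^*\to S_\nu V^*\otimes S_\mu V^*.$$ Suppose the isotypic component with highest weight $\pi$ appears with the same multiplicity $M$ in $S_\mu V^*\otimes S_\nu V^*$ and in $S_\mu V^*\otimes V^*\otimes S_\mu V^*$. Then the isotypic component with highest weight $\pi$ appears in the image of $T'$ with multiplicity $M$.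
   Context: $S_\lambda V$ denotes the irreducible polynomial $GL(V)$-module (Schur module) indexed by the partition $\lambda$. By the Pieri rule, $S_\nu V^*$ occurs with multiplicity one in $V^*\otimes S_\mu V^*$, so $\iota$ and $P$ are unique up to scale. The map $T'$ is the Young flattening of the $GL(V)$-invariant tensor in $V^*\otimes S_\mu V^*\otimes S_\nu V$. *)

(* Concrete model of the GL(V)-modules built from dual(V),
   with V = C^k (standard basis), dual(V) = row vectors (dual basis coordinates),
   and tensor powers (dual V)^{(x) n} realised as row vectors of length k ^ n
   via the Kronecker product (mathcomp-real-closed's mxtens). *)
From HB Require Import structures.
From mathcomp Require Import all_boot all_order all_algebra.
From mathcomp Require Import mxtens.
Set Implicit Arguments. Unset Strict Implicit. Unset Printing Implicit Defensive.
Import Order.TTheory GRing.Theory Num.Theory.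
Local Open Scope ring_scope.

Definition is_partition (l : seq nat) : bool :=
  sorted geq l && all (fun x => 0 < x)%N l.

Definition adds_one_cell (mu nu : seq nat) : Prop :=
  is_partition nu /\ exists i : nat, nu = incr_nth mu i.

(* Action of g in GL(V) on dual(V) (contragredient), on row vectors of dual
   coordinates: phi |-> phi *m g^{-1}; and on (dual V)^{(x) n}. *)
Definition dualrep (F : fieldType) (k n : nat) (g : 'M[F]_k) : 'M[F]_(k ^ n) :=
  (invmx g) ^t n.
Arguments dualrep {F} k n g.

(* A (right, row-vector) representation of GL_k on F^d is given by a map
   rho : 'M_k -> 'M_d; a subspace is the row space of a matrix. *)
Definition invariant (F : fieldType) (k d : nat) (rho : 'M[F]_k -> 'M[F]_d)
  (r : nat) (U : 'M[F]_(r, d)) : Prop :=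
  forall g : 'M[F]_k, g \in unitmx -> (U *m rho g <= U)%MS.

Definition irreducible_sub (F : fieldType) (k d : nat) (rho : 'M[F]_k -> 'M[F]_d)
  (r : nat) (U : 'M[F]_(r, d)) : Prop :=
  [/\ invariant rho U, (0 < \rank U)%N &
      forall W : 'M[F]_d, (W <= U)%MS -> invariant rho W ->
        \rank W = 0%N \/ (W == U)%MS].

Definition hwvec (F : fieldType) (k d : nat) (rho : 'M[F]_k -> 'M[F]_d)
  (pi : 'I_k -> int) (w : 'rV[F]_d) : Prop :=
  (forall t : 'rV[F]_k, (forall i, t 0 i != 0) ->
      w *m rho (diag_mx t) = (\prod_(i < k) (t 0 i) ^ (pi i)) *: w) /\
  (forall u : 'M[F]_k, (forall i j : 'I_k, (j < i)%N -> u i j = 0) ->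
      (forall i, u i i = 1) -> w *m rho u = w).

(* The isotypic component of highest weight pi appears in the invariant
   subspace U with multiplicity M: the space of highest weight vectors of
   weight pi in U has dimension M. *)
Definition hw_mult (F : fieldType) (k d : nat) (rho : 'M[F]_k -> 'M[F]_d)
  (r : nat) (U : 'M[F]_(r, d)) (pi : 'I_k -> int) (M : nat) : Prop :=
  exists B : 'M[F]_(M, d), row_free B /\
    forall w : 'rV[F]_d, (w <= B)%MS <-> ((w <= U)%MS /\ hwvec rho pi w).

(* Highest weight of S_lambda dual(V) = (S_lambda V)^* : (-l_k, ..., -l_1). *)
Definition dualwt (k : nat) (l : seq nat) : 'I_k -> int :=
  fun j => - ((nth 0%N l (k - 1 - j))%:Z).
Arguments dualwt : clear implicits.

(* S is (a realisation inside (dual V)^{(x)|lambda|} of) the Schur module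
   S_lambda dual(V): the irreducible GL(V)-module of highest weight dualwt l. *)
Definition is_Schur_dual (F : fieldType) (k : nat) (l : seq nat)
  (S : 'M[F]_(k ^ sumn l)) : Prop :=
  irreducible_sub (dualrep k (sumn l)) S /\
  exists w : 'rV[F]_(k ^ sumn l),
    [/\ w != 0, (w <= S)%MS & hwvec (dualrep k (sumn l)) (dualwt k l) w].

Definition equivariant_on (F : fieldType) (k d1 d2 : nat)
  (rho1 : 'M[F]_k -> 'M[F]_d1) (rho2 : 'M[F]_k -> 'M[F]_d2)
  (r : nat) (U : 'M[F]_(r, d1)) (f : 'M[F]_(d1, d2)) : Prop :=
  forall g : 'M[F]_k, g \in unitmx -> U *m (rho1 g *m f - f *m rho2 g) = 0.

(* Up to reassociation T' = J Q with J = 1 (x) iota and Q = P (x) 1, both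
   equivariant.  J is injective on S_mu (x) S_nu, so it maps the M-dimensional
   space of highest weight vectors of weight pi there into, hence onto, the
   M-dimensional one of A = S_mu (x) V^* (x) S_mu.  Q maps A onto S_nu (x) S_mu,
   and every highest weight vector downstairs lifts to one in A: since rho maps
   the conjugate transpose of g to that of rho g, the orthogonal complement in A
   of the invariant subspace A :&: ker Q is invariant as well (the unitary
   trick).  Hence the highest weight vectors of S_nu (x) S_mu, a space of
   dimension M by the flip of the two factors, all lie in the image of T',
   which is contained in S_nu (x) S_mu. *)

From Pilot Require Import Defs.
From HB Require Import structures.
From mathcomp Require Import all_boot all_order all_algebra.
From mathcomp Require Import mxtens complex.
From mathcomp Require Import reals.
Set Implicit Arguments.
Unset Strict Implicit.
Unset Printing Implicit Defensive.
Import Order.TTheory GRing.Theory Num.Theory.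
Local Open Scope ring_scope.

Section TensorAssociativity.
Variable R : comPzRingType.

Lemma tensmxA a b c d e f (X : 'M[R]_(a, b)) (Y : 'M_(c, d)) (Z : 'M_(e, f)) :
  (X *t Y) *t Z = castmx (mulnA a c e, mulnA b d f) (X *t (Y *t Z)).
Proof.
apply/matrixP => i j.
case: (mxtens_indexP i) => i12 i3; case: (mxtens_indexP i12) => i1 i2.
case: (mxtens_indexP j) => j12 j3; case: (mxtens_indexP j12) => j1 j2.
rewrite castmxE !tensmxE.
have -> : cast_ord (esym (mulnA a c e)) (mxtens_index (mxtens_index (i1, i2), i3))
  = mxtens_index (i1, mxtens_index (i2, i3)).
  by apply: val_inj => /=; rewrite mulnDl -mulnA addnA.
have -> : cast_ord (esym (mulnA b d f)) (mxtens_index (mxtens_index (j1, j2), j3))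
  = mxtens_index (j1, mxtens_index (j2, j3)).
  by apply: val_inj => /=; rewrite mulnDl -mulnA addnA.
by rewrite !tensmxE mulrA.
Qed.

Lemma tensmxA_mul a b c d e f p (X : 'M[R]_(a, d)) (Y : 'M_(b, e)) (Z : 'M_(c, f))
    (W : 'M_(d * e * f, p)) :
  (X *t (Y *t Z)) *m castmx (esym (mulnA d e f), erefl) W
  = castmx (esym (mulnA a b c), erefl) (((X *t Y) *t Z) *m W).
Proof.
rewrite tensmxA castmx_mul castmx_comp castmx_id mulmx_cast castmx_id.
by congr (castmx (_, _) _ *m W); apply: eq_irrelevance.
Qed.

Lemma castmx_mull m m' n p (e : m = m') (A : 'M[R]_(m, n)) (B : 'M_(n, p)) :
  castmx (e, erefl) A *m B = castmx (e, erefl) (A *m B).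
Proof. by rewrite castmx_mul castmx_id. Qed.

End TensorAssociativity.

Section TensorSwap.
Variable R : comPzRingType.

Definition swapmx m n : 'M[R]_(m * n, n * m) :=
  \matrix_(i, j)
    (mxtens_unindex i == ((mxtens_unindex j).2, (mxtens_unindex j).1))%:R.

Lemma swapmxE m n (i1 : 'I_m) (i2 : 'I_n) j1 j2 :
  swapmx m n (mxtens_index (i1, i2)) (mxtens_index (j1, j2)) =
  ((i1 == j2) && (i2 == j1))%:R.
Proof. by rewrite mxE !mxtens_indexK. Qed.

Lemma mulmx_swapmx m n p (A : 'M[R]_(p, m * n)) (i : 'I_p) (j1 : 'I_n) (j2 : 'I_m) :
  (A *m swapmx m n) i (mxtens_index (j1, j2)) = A i (mxtens_index (j2, j1)).
Proof.
rewrite mxE (bigD1 (mxtens_index (j2, j1))) //= swapmxE !eqxx mulr1 big1 ?addr0 //.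
move=> l; case: (mxtens_indexP l) => l1 l2.
rewrite (inj_eq (can_inj (@mxtens_indexK _ _))) swapmxE -xpair_eqE.
by move=> /negbTE->; rewrite mulr0.
Qed.

Lemma swapmx_mul m n p (A : 'M[R]_(m * n, p)) (i1 : 'I_n) (i2 : 'I_m) j :
  (swapmx n m *m A) (mxtens_index (i1, i2)) j = A (mxtens_index (i2, i1)) j.
Proof.
rewrite mxE (bigD1 (mxtens_index (i2, i1))) //= swapmxE !eqxx mul1r big1 ?addr0 //.
move=> l; case: (mxtens_indexP l) => l1 l2.
rewrite (inj_eq (can_inj (@mxtens_indexK _ _))) swapmxE andbC -xpair_eqE eq_sym.
by move=> /negbTE->; rewrite mul0r.
Qed.

Lemma tensmx_swap a b c d (X : 'M[R]_(a, b)) (Y : 'M_(c, d)) :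
  (X *t Y) *m swapmx b d = swapmx a c *m (Y *t X).
Proof.
apply/matrixP => i j; case: (mxtens_indexP i) => i1 i2.
case: (mxtens_indexP j) => j1 j2.
by rewrite mulmx_swapmx swapmx_mul !tensmxE mulrC.
Qed.

Lemma swapmxK m n : swapmx m n *m swapmx n m = 1%:M.
Proof.
apply/matrixP => i j; case: (mxtens_indexP i) => i1 i2.
case: (mxtens_indexP j) => j1 j2.
by rewrite mulmx_swapmx swapmxE !mxE (inj_eq (can_inj (@mxtens_indexK _ _))).
Qed.

End TensorSwap.

Section TensorSubspaces.
Variable F : fieldType.

Lemma tensmxS m1 m2 n1 p1 p2 n2 (X : 'M[F]_(m1, n1)) (X' : 'M_(m2, n1))
    (Y : 'M_(p1, n2)) (Y' : 'M_(p2, n2)) :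
  (X <= X')%MS -> (Y <= Y')%MS -> (X *t Y <= X' *t Y')%MS.
Proof.
by move=> /submxP[D ->] /submxP[E ->]; rewrite -tensmx_mul submxMl.
Qed.

Lemma row_free_swapmx m n : row_free (swapmx F m n).
Proof. by apply/row_freeP; exists (swapmx F n m); apply: swapmxK. Qed.

Lemma row_full_swapmx m n : row_full (swapmx F m n).
Proof. by apply/row_fullP; exists (swapmx F n m); apply: swapmxK. Qed.

End TensorSubspaces.

Section LeftInverse.
Variable F : fieldType.

Lemma linv_of_mxrank_mul r m n (U : 'M[F]_(r, m)) (f : 'M_(m, n)) :
  \rank (U *m f) = \rank U -> exists L, U *m f *m L = U.
Proof.
move=> rank_Uf; have capU0 : (U :&: kermx f)%MS = 0.
  apply/eqP; rewrite -mxrank_eq0.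
  by have /eqP := mxrank_mul_ker U f; rewrite rank_Uf -{2}[\rank U]addn0 eqn_add2l.
exists (pinvmx (U *m f) *m U); apply/eqP.
rewrite -subr_eq0 -submx0 -capU0 sub_capmx mulmxA addmx_sub ?eqmx_opp ?submxMl //=.
by rewrite sub_kermx mulmxBl -(mulmxA _ U f) mulmxKpV // subrr.
Qed.

Lemma mxrank_mul_linv p r m n (B : 'M[F]_(p, m)) (U : 'M_(r, m)) (f : 'M_(m, n)) L :
  (B <= U)%MS -> U *m f *m L = U -> \rank (B *m f) = \rank B.
Proof.
move=> /submxP[D ->] UfL; apply/eqP; rewrite eqn_leq mxrankM_maxl /=.
have DUfL : D *m U *m f *m L = D *m U by rewrite -!mulmxA (mulmxA U) UfL.
by rewrite -{1}DUfL mxrankM_maxl.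
Qed.

End LeftInverse.

Section Equivariance.
Variables (F : fieldType) (k : nat).

Lemma equivariant_on_submx d1 d2 (rho1 : 'M[F]_k -> 'M_d1) (rho2 : 'M_k -> 'M_d2)
    r (U : 'M_(r, d1)) f :
  equivariant_on rho1 rho2 U f -> forall g, g \in unitmx ->
  forall p (X : 'M_(p, d1)), (X <= U)%MS -> X *m rho1 g *m f = X *m f *m rho2 g.
Proof.
move=> ef g gu p X /submxP[D ->]; apply/eqP; rewrite -subr_eq0 -!mulmxA.
by rewrite -!mulmxBr ef ?mulmx0.
Qed.

Lemma equivariant_on_tensl e d1 d2 (sigma : 'M[F]_k -> 'M_e)
    (rho1 : 'M_k -> 'M_d1) (rho2 : 'M_k -> 'M_d2) s r (S : 'M_(s, e))
    (U : 'M_(r, d1)) f :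
  equivariant_on rho1 rho2 U f ->
  equivariant_on (fun g => sigma g *t rho1 g) (fun g => sigma g *t rho2 g)
    (S *t U) (1%:M *t f).
Proof.
move=> ef g gu; rewrite mulmxBr !mulmxA !tensmx_mul !mulmx1 ?mul1mx.
by rewrite (equivariant_on_submx ef) // subrr.
Qed.

Lemma equivariant_on_tensr e d1 d2 (sigma : 'M[F]_k -> 'M_e)
    (rho1 : 'M_k -> 'M_d1) (rho2 : 'M_k -> 'M_d2) s r (S : 'M_(s, e))
    (U : 'M_(r, d1)) f :
  equivariant_on rho1 rho2 U f ->
  equivariant_on (fun g => rho1 g *t sigma g) (fun g => rho2 g *t sigma g)
    (U *t S) (f *t 1%:M).
Proof.
move=> ef g gu; rewrite mulmxBr !mulmxA !tensmx_mul !mulmx1 ?mul1mx.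
by rewrite (equivariant_on_submx ef) // subrr.
Qed.

Lemma equivariant_on_tensA a b c d1 d2 d3 d' (rho1 : 'M[F]_k -> 'M_d1)
    (rho2 : 'M_k -> 'M_d2) (rho3 : 'M_k -> 'M_d3) (rho' : 'M_k -> 'M_d')
    (X : 'M_(a, d1)) (Y : 'M_(b, d2)) (Z : 'M_(c, d3)) W :
  equivariant_on (fun g => (rho1 g *t rho2 g) *t rho3 g) rho' ((X *t Y) *t Z) W ->
  equivariant_on (fun g => rho1 g *t (rho2 g *t rho3 g)) rho' (X *t (Y *t Z))
    (castmx (esym (mulnA d1 d2 d3), erefl) W).
Proof.
move=> eW g gu; apply/eqP.
rewrite mulmxBr subr_eq0 !mulmxA !tensmx_mul !tensmxA_mul castmx_mull -!tensmx_mul.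
by move: (equivariant_on_submx eW gu (submx_refl _)) => /= ->.
Qed.

Lemma invariant1 d (rho : 'M[F]_k -> 'M_d) : Defs.invariant rho (1%:M : 'M_d).
Proof. by move=> g _; apply: submx1. Qed.

Lemma invariant_tens d1 d2 (rho1 : 'M[F]_k -> 'M_d1) (rho2 : 'M_k -> 'M_d2)
    r1 r2 (U1 : 'M_(r1, d1)) (U2 : 'M_(r2, d2)) :
  Defs.invariant rho1 U1 -> Defs.invariant rho2 U2 ->
  Defs.invariant (fun g => rho1 g *t rho2 g) (U1 *t U2).
Proof. by move=> inv1 inv2 g gu; rewrite tensmx_mul tensmxS ?inv1 ?inv2. Qed.

Lemma invariant_cap_kermx d d' (rho : 'M[F]_k -> 'M_d) (rho' : 'M_k -> 'M_d')
    r (U : 'M_(r, d)) Q :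
  Defs.invariant rho U -> equivariant_on rho rho' U Q ->
  Defs.invariant rho (U :&: kermx Q)%MS.
Proof.
move=> invU eQ g gu; have KU := capmxSl U (kermx Q).
rewrite sub_capmx (submx_trans (submxMr _ KU)) ?invU //= sub_kermx.
by rewrite (equivariant_on_submx eQ) // (sub_kermxP (capmxSr _ _)) mul0mx.
Qed.

Lemma unitmx_diag (t : 'rV[F]_k) : (forall i, t 0 i != 0) -> diag_mx t \in unitmx.
Proof.
by move=> t_neq0; rewrite unitmxE det_diag unitfE; apply/prodf_neq0 => i _.
Qed.

Lemma unitmx_unitriangular (u : 'M[F]_k) :
  (forall i j : 'I_k, (j < i)%N -> u i j = 0) -> (forall i, u i i = 1) ->
  u \in unitmx.
Proof.
move=> u_upper u_diag; rewrite -unitmx_tr unitmxE det_trig.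
  by rewrite (eq_bigr (fun=> 1)) ?prodr_const ?expr1n ?unitr1 // => i _; rewrite mxE.
by apply/is_trig_mxP => i j ij; rewrite mxE u_upper.
Qed.

Lemma hwvec_equivariant d d' (rho : 'M[F]_k -> 'M_d) (rho' : 'M_k -> 'M_d')
    r (U : 'M_(r, d)) Q pi (x : 'rV_d) :
  equivariant_on rho rho' U Q -> (x <= U)%MS -> hwvec rho pi x ->
  hwvec rho' pi (x *m Q).
Proof.
move=> eQ xU [x_torus x_unip]; split=> [t t_neq0 | u u_upper u_diag].
  rewrite -(equivariant_on_submx eQ (unitmx_diag t_neq0)) //.
  by rewrite x_torus // scalemxAl.
by rewrite -(equivariant_on_submx eQ (unitmx_unitriangular u_upper u_diag)) // x_unip.
Qed.

Lemma hwvec_intertwine d d' (rho : 'M[F]_k -> 'M_d) (rho' : 'M_k -> 'M_d')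
    (S : 'M_(d, d')) pi (v : 'rV_d) :
  row_free S -> (forall g, rho g *m S = S *m rho' g) ->
  hwvec rho' pi (v *m S) <-> hwvec rho pi v.
Proof.
move=> S_free S_int.
have eigenE g c : v *m S *m rho' g = c *: (v *m S) <-> v *m rho g = c *: v.
  rewrite -mulmxA -S_int mulmxA scalemxAl.
  by split=> [/(row_free_inj S_free) | ->].
have fixedE g : v *m S *m rho' g = v *m S <-> v *m rho g = v.
  by have := eigenE g 1; rewrite !scale1r.
split=> -[v_torus v_unip]; split=> [t t_neq0 | u u_upper u_diag].
- by apply/(eigenE _ _).1/v_torus.
- by apply/(fixedE _).1/v_unip.
- by apply/(eigenE _ _).2/v_torus.
- by apply/(fixedE _).2/v_unip.
Qed.

End Equivariance.

Section HighestWeightBasis.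
Variables (F : fieldType) (k : nat).

Definition hw_basis d (rho : 'M[F]_k -> 'M_d) r (U : 'M[F]_(r, d)) pi m
    (B : 'M[F]_(m, d)) :=
  forall w : 'rV_d, (w <= B)%MS <-> (w <= U)%MS /\ hwvec rho pi w.

Variables (d d' : nat) (rho : 'M[F]_k -> 'M[F]_d) (rho' : 'M[F]_k -> 'M[F]_d').
Variable pi : 'I_k -> int.

Lemma hw_basis_sub r (U : 'M[F]_(r, d)) m (B : 'M[F]_(m, d)) :
  hw_basis rho U pi B -> (B <= U)%MS.
Proof. by move=> hwB; apply/row_subP => i; have /hwB[] := row_sub i B. Qed.

Lemma hw_basis_restrict r s (V : 'M[F]_(r, d)) (W : 'M[F]_(s, d)) m
    (B : 'M[F]_(m, d)) :
  hw_basis rho V pi B -> (B <= W)%MS -> (W <= V)%MS -> hw_basis rho W pi B.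
Proof.
move=> hwB sBW sWV w; split=> [wB | [wW w_hw]].
  by split; [apply: submx_trans sBW | case/hwB: wB].
exact/hwB/(conj (submx_trans wW sWV)).
Qed.

Lemma hw_basis_equivariant r s (U : 'M[F]_(r, d)) (V : 'M[F]_(s, d')) m m'
    (B : 'M[F]_(m, d)) (B' : 'M[F]_(m', d')) f :
  hw_basis rho U pi B -> hw_basis rho' V pi B' ->
  equivariant_on rho rho' U f -> (U *m f <= V)%MS -> (B *m f <= B')%MS.
Proof.
move=> hwB hwB' ef sUfV; apply/row_subP => i; rewrite row_mul.
have /hwB[xU x_hw] := row_sub i B.
apply/hwB'; split; last exact: hwvec_equivariant ef xU x_hw.
exact: submx_trans (submxMr _ xU) sUfV.
Qed.

Lemma eqmx_hw_basis_linv r s (U : 'M[F]_(r, d)) (V : 'M[F]_(s, d')) m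
    (B : 'M[F]_(m, d)) (B' : 'M[F]_(m, d')) f L :
  hw_basis rho U pi B -> hw_basis rho' V pi B' -> row_free B -> row_free B' ->
  equivariant_on rho rho' U f -> (U *m f <= V)%MS -> U *m f *m L = U ->
  (B *m f == B')%MS.
Proof.
move=> hwB hwB' B_free B'_free ef sUfV UfL.
rewrite -(mxrank_leqif_eq (hw_basis_equivariant hwB hwB' ef sUfV)).2.
by rewrite (mxrank_mul_linv (hw_basis_sub hwB) UfL) (eqP B_free) (eqP B'_free).
Qed.

Lemma hw_basis_intertwine r s (U : 'M[F]_(r, d)) (V : 'M[F]_(s, d')) m
    (B : 'M[F]_(m, d)) (S : 'M[F]_(d, d')) (S' : 'M[F]_(d', d)) :
  S *m S' = 1%:M -> S' *m S = 1%:M -> (forall g, rho g *m S = S *m rho' g) ->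
  (U *m S == V)%MS -> hw_basis rho U pi B -> hw_basis rho' V pi (B *m S).
Proof.
move=> SS' S'S S_int /eqmxP eqUSV hwB w.
have S_free : row_free S by apply/row_freeP; exists S'.
have wE : w = w *m S' *m S by rewrite -mulmxA S'S mulmx1.
by rewrite -eqUSV wE !submxMfree // hwvec_intertwine.
Qed.

End HighestWeightBasis.

Lemma hw_basis_swap (F : fieldType) k m n (rho1 : 'M[F]_k -> 'M_m)
    (rho2 : 'M_k -> 'M_n) r1 r2 (S1 : 'M_(r1, m)) (S2 : 'M_(r2, n)) pi M
    (B : 'M_(M, m * n)) :
  hw_basis (fun g => rho1 g *t rho2 g) (S1 *t S2) pi B ->
  hw_basis (fun g => rho2 g *t rho1 g) (S2 *t S1) pi (B *m swapmx F m n).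
Proof.
apply: hw_basis_intertwine (swapmxK _ _ _) (swapmxK _ _ _) _ _ => [g|].
  exact: tensmx_swap.
by rewrite tensmx_swap; apply/eqmxP/eqmxMfull/row_full_swapmx.
Qed.

Section UnitaryTrick.
Variable C : numClosedFieldType.
Local Open Scope sesquilinear_scope.

Lemma trmxC_mul m n p (A : 'M[C]_(m, n)) (B : 'M_(n, p)) :
  (A *m B) ^t* = B ^t* *m A ^t*.
Proof. by rewrite trmx_mul map_mxM. Qed.

Lemma trmxC_tens m n p q (A : 'M[C]_(m, n)) (B : 'M_(p, q)) :
  (A *t B) ^t* = A ^t* *t B ^t*.
Proof. by rewrite trmx_tens map_mxT. Qed.

Lemma trmxC_ntens m n (A : 'M[C]_(m, n)) e : (ntensmx A e) ^t* = ntensmx (A ^t*) e.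
Proof.
case: e => [|e]; first by rewrite /= trmx1 map_mx1.
by elim: e => //= e IHe; rewrite trmxC_tens IHe.
Qed.

Lemma trmxC_inv n (A : 'M[C]_n) : (invmx A) ^t* = invmx (A ^t*).
Proof. by rewrite trmx_inv map_invmx. Qed.

Lemma unitmx_trmxC n (A : 'M[C]_n) : (A ^t* \in unitmx) = (A \in unitmx).
Proof. by rewrite map_unitmx unitmx_tr. Qed.

Lemma dualrep_trmxC k e (g : 'M[C]_k) : (dualrep k e g) ^t* = dualrep k e (g ^t*).
Proof. by rewrite /dualrep trmxC_ntens trmxC_inv. Qed.

Lemma capmx_kermx_trmxC m n (A : 'M[C]_(m, n)) : (A :&: kermx (A ^t*))%MS = 0.
Proof. by have := orthomx_ortho_disj A; rewrite /orthomx /= mul1mx. Qed.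

Lemma addsmx_kermx_trmxC m n (A : 'M[C]_(m, n)) : (A + kermx (A ^t*) :=: 1%:M)%MS.
Proof. by have := addsmx_ortho A; rewrite /orthomx /= mul1mx. Qed.

Variables (k d : nat) (rho : 'M[C]_k -> 'M[C]_d).
Hypothesis rho_trmxC : forall g, g \in unitmx -> (rho g) ^t* = rho (g ^t*).

Lemma invariant_orthocomplement r s (U : 'M_(r, d)) (K : 'M_(s, d)) :
  Defs.invariant rho U -> Defs.invariant rho K ->
  Defs.invariant rho (U :&: kermx (K ^t*))%MS.
Proof.
move=> invU invK g gu.
rewrite sub_capmx (submx_trans (submxMr _ (capmxSl _ _))) ?invU //=.
have /submxP[W KW] := invK _ (etrans (unitmx_trmxC g) gu).
have rhoK : rho g *m K ^t* = K ^t* *m W ^t*.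
  by rewrite -[g]trmxCK -rho_trmxC ?unitmx_trmxC // -!trmxC_mul KW.
by rewrite sub_kermx -mulmxA rhoK mulmxA (sub_kermxP (capmxSr _ _)) mul0mx.
Qed.

Lemma invariant_complement r s (U : 'M_(r, d)) (K : 'M_(s, d)) :
  Defs.invariant rho U -> Defs.invariant rho K -> (K <= U)%MS ->
  exists Kc : 'M_d,
    [/\ Defs.invariant rho Kc, (Kc <= U)%MS, (K :&: Kc = 0)%MS & (U <= K + Kc)%MS].
Proof.
move=> invU invK sKU; exists (U :&: kermx (K ^t*))%MS; split.
- exact: invariant_orthocomplement.
- exact: capmxSl.
- by apply/eqP; rewrite -submx0 -(capmx_kermx_trmxC K) capmxS ?capmxSr.
- rewrite capmxC (matrix_modl _ sKU) sub_capmx submx_refl andbT.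
  by rewrite (addsmx_kermx_trmxC K) submx1.
Qed.

Lemma hwvec_lift d' (rho' : 'M_k -> 'M_d') r (U : 'M_(r, d)) Q pi (y : 'rV_d') :
  Defs.invariant rho U -> equivariant_on rho rho' U Q ->
  (y <= U *m Q)%MS -> hwvec rho' pi y ->
  exists x : 'rV_d, [/\ (x <= U)%MS, hwvec rho pi x & x *m Q = y].
Proof.
move=> invU eQ /submxP[a yE] [y_torus y_unip].
set K := (U :&: kermx Q)%MS; have KQ : K *m Q = 0 by apply/sub_kermxP/capmxSr.
have [Kc [invKc sKcU KKc0 sUKKc]] :=
  invariant_complement invU (invariant_cap_kermx invU eQ) (capmxSl _ _).
have /sub_addsmxP[[u v] /= auE] := submx_trans (submxMl a U) sUKKc.
set x := v *m Kc; have xKc : (x <= Kc)%MS := submxMl _ _.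
have xU := submx_trans xKc sKcU.
have xQ : x *m Q = y by rewrite yE mulmxA auE mulmxDl -(mulmxA u) KQ mulmx0 add0r.
have x_eigen g c : g \in unitmx -> y *m rho' g = c *: y -> x *m rho g = c *: x.
  move=> gu yg; set z := x *m rho g - c *: x.
  have zKc : (z <= Kc)%MS.
    by rewrite addmx_sub ?eqmx_opp ?scalemx_sub // (submx_trans (submxMr _ xKc)) ?invKc.
  have zU : (z <= U)%MS.
    by rewrite addmx_sub ?eqmx_opp ?scalemx_sub // (submx_trans (submxMr _ xU)) ?invU.
  have zQ : z *m Q = 0.
    by rewrite mulmxBl (equivariant_on_submx eQ) // xQ yg -scalemxAl xQ subrr.
  apply/eqP; rewrite -subr_eq0 -submx0 -KKc0 !sub_capmx zU zKc andbT /=.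
  by apply/sub_kermxP.
exists x; split=> //; split=> [t t_neq0 | w w_upper w_diag].
  exact/x_eigen/y_torus/t_neq0/unitmx_diag.
rewrite -[RHS]scale1r; apply: x_eigen; first exact: unitmx_unitriangular.
by rewrite scale1r y_unip.
Qed.

Lemma hw_basis_lift d' (rho' : 'M_k -> 'M_d') r s (U : 'M_(r, d)) (V : 'M_(s, d'))
    pi m m' (B : 'M_(m, d)) (B' : 'M_(m', d')) Q :
  hw_basis rho U pi B -> hw_basis rho' V pi B' ->
  Defs.invariant rho U -> equivariant_on rho rho' U Q -> (V <= U *m Q)%MS ->
  (B' <= B *m Q)%MS.
Proof.
move=> hwB hwB' invU eQ sVUQ; apply/row_subP => i.
have /hwB'[yV y_hw] := row_sub i B'.
have [x [xU x_hw <-]] := hwvec_lift invU eQ (submx_trans yV sVUQ) y_hw.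
by apply/submxMr/hwB.
Qed.

End UnitaryTrick.

Theorem proposition2 (R : realType) (k : nat) (mu nu : seq nat)
  (Hmu : is_partition mu) (Hmuk : (size mu <= k)%N) (Hnuk : (size nu <= k)%N)
  (Hcell : adds_one_cell mu nu)
  (Smu : 'M[R[i]]_(k ^ sumn mu)) (Snu : 'M[R[i]]_(k ^ sumn nu))
  (HSmu : is_Schur_dual Smu) (HSnu : is_Schur_dual Snu)
  (* iota : S_nu dual(V) -> dual(V) (x) S_mu dual(V), an equivariant inclusion *)
  (iota : 'M[R[i]]_(k ^ sumn nu, k * k ^ sumn mu))
  (Hiota_into : (Snu *m iota <= (1%:M : 'M_k) *t Smu)%MS)
  (Hiota_inj : \rank (Snu *m iota) = \rank Snu)
  (Hiota_eq : equivariant_on (dualrep k (sumn nu))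
                (fun g => invmx g *t dualrep k (sumn mu) g) Snu iota)
  (* P : S_mu dual(V) (x) dual(V) -> S_nu dual(V), an equivariant projection *)
  (P : 'M[R[i]]_(k ^ sumn mu * k, k ^ sumn nu))
  (HP_onto : ((Smu *t (1%:M : 'M_k)) *m P == Snu)%MS)
  (HP_eq : equivariant_on (fun g => dualrep k (sumn mu) g *t invmx g)
                (dualrep k (sumn nu)) (Smu *t (1%:M : 'M_k)) P)
  (pi : 'I_k -> int) (M : nat)
  (H1 : hw_mult (fun g => dualrep k (sumn mu) g *t dualrep k (sumn nu) g)
          (Smu *t Snu) pi M)
  (H2 : hw_mult (fun g => dualrep k (sumn mu) g *t
                          (invmx g *t dualrep k (sumn mu) g))
          (Smu *t ((1%:M : 'M_k) *t Smu)) pi M) :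
  let T' : 'M[R[i]]_(k ^ sumn mu * k ^ sumn nu, k ^ sumn nu * k ^ sumn mu) :=
    ((1%:M : 'M_(k ^ sumn mu)) *t iota) *m
    castmx (esym (mulnA (k ^ sumn mu)%N k (k ^ sumn mu)%N), erefl)
      (P *t (1%:M : 'M_(k ^ sumn mu))) in
  hw_mult (fun g => dualrep k (sumn nu) g *t dualrep k (sumn mu) g)
    ((Smu *t Snu) *m T') pi M.
Proof.
move=> T'; rewrite {}/T'.
set J := 1%:M *t iota; set Q := castmx _ (P *t 1%:M).
set A := Smu *t ((1%:M : 'M_k) *t Smu).
have [Bmn [Bmn_free Bmn_hw]] := H1; have [BA [BA_free BA_hw]] := H2.
have [[Smu_inv _ _] _] := HSmu.
have J_eq := equivariant_on_tensl (dualrep k (sumn mu)) Smu Hiota_eq.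
have J_into : (Smu *t Snu *m J <= A)%MS by rewrite tensmx_mul mulmx1 tensmxS.
have [L iotaL] := linv_of_mxrank_mul Hiota_inj.
have /andP[_ BA_BmnJ] : (Bmn *m J == BA)%MS.
  apply: (eqmx_hw_basis_linv (L := 1%:M *t L)) Bmn_hw BA_hw Bmn_free BA_free J_eq J_into _.
  by rewrite !tensmx_mul !mulmx1 iotaL.
have Q_eq := equivariant_on_tensA (equivariant_on_tensr (dualrep k (sumn mu)) Smu HP_eq).
have /andP[AQ_sub sub_AQ] : (A *m Q == Snu *t Smu)%MS.
  case/andP: HP_onto => sPnu snuP; rewrite /A /Q tensmxA_mul tensmx_mul mulmx1.
  by apply/andP; split; rewrite eqmx_cast tensmxS.
have A_inv := invariant_tens Smu_inv (invariant_tens (invariant1 (@invmx _ k)) Smu_inv).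
have Bnm_hw := hw_basis_swap Bmn_hw; set Bnm := Bmn *m _ in Bnm_hw *.
have Bnm_BAQ : (Bnm <= BA *m Q)%MS.
  apply: hw_basis_lift BA_hw Bnm_hw A_inv Q_eq sub_AQ.
  by move=> g _; rewrite !trmxC_tens !dualrep_trmxC trmxC_inv.
exists Bnm; split; first by rewrite /row_free mxrankMfree ?row_free_swapmx.
apply: hw_basis_restrict Bnm_hw _ _.
  rewrite (submx_trans Bnm_BAQ) // mulmxA submxMr // (submx_trans BA_BmnJ) //.
  exact/submxMr/hw_basis_sub/Bmn_hw.
by rewrite mulmxA (submx_trans (submxMr _ J_into)).
Qed.
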